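(* Let $\mathcal{A}\in\mathbb{R}^{d_1\times\cdots\times d_k}$ be an order-$k$ real tensor. (a) If $\pi_1,\pi_2\in\mathcal{P}_{[k]}$ with $\pi_1\le\pi_2$ and $\mathcal{A}$ is $\pi_1$-OD, then $\mathcal{A}$ is $\pi_2$-OD. (b) If $\pi\in\mathcal{P}_{[k]}$, $\pi\ne\mathbf{1}_{[k]}$, and $\mathcal{A}$ is $\pi$-OD with a decomposition $\mathcal{A}=\sum_{n=1}^r\lambda_n\mathbf{a}^{(n)}_1\otimes\cdots\otimes\mathbf{a}^{(n)}_k$ as in the definition of $\pi$-OD, then $\|\mathrm{Unfold}_\pi(\mathcal{A})\|_\sigma=\lambda_1$.
   Context: $\mathcal{P}_{[k]}$ is the set of partitions of $[k]$, ordered by refinement: $\pi_1\le\pi_2$ if every block of $\pi_1$ is contained in a block of $\pi_2$; $\mathbf{1}_{[k]}=\{[k]\}$. $\mathcal{A}$ is called $\pi$-orthogonal decomposable ($\pi$-OD) if $\mathcal{A}=\sum_{n=1}^r\lambda_n\mathbf{a}^{(n)}_1\otimes\cdots\otimes\mathbf{a}^{(n)}_k$ with $\lambda_1\ge\lambda_2\ge\cdots\ge\lambda_r\ge0$ and vectors $\mathbf{a}^{(n)}_i\in\mathbb{R}^{d_i}$ satisfying $\langle\otimes_{i\in B}\mathbf{a}^{(n)}_i,\otimes_{i\in B}\mathbf{a}^{(m)}_i\rangle=\delta_{nm}$ for all $B\in\pi$ and all $n,m\in[r]$ (inner product = sum of entrywise products). For a real tensor $\mathcal{T}\in\mathbb{R}^{e_1\times\cdots\times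 e_m}$, $\|\mathcal{T}\|_\sigma=\sup\{\sum t_{i_1\dots i_m}x^{(1)}_{i_1}\cdots x^{(m)}_{i_m}:\ \|\mathbf{x}_n\|_2=1\}$. Unfolding: for $\pi=\{B_1,\dots,B_\ell\}$, $\mathrm{Unfold}_\pi(\mathcal{A})$ is the order-$\ell$ tensor of dimensions $(\prod_{j\in B_1}d_j,\dots,\prod_{j\in B_\ell}d_j)$ whose entry at $(m_1,\dots,m_\ell)$ is $a_{i_1\dots i_k}$, where $m_j$ corresponds to $(i_r)_{r\in B_j}$ under a fixed bijection $\prod_{r\in B_j}[d_r]\to[\prod_{r\in B_j}d_r]$. *)

From HB Require Import structures.
From mathcomp Require Import all_boot all_order all_algebra.
From mathcomp Require Import boolp classical_sets reals.
Set Implicit Arguments. Unset Strict Implicit. Unset Printing Implicit Defensive.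
Import Order.TTheory GRing.Theory Num.Theory.
Local Open Scope ring_scope.

Section TensorDefs.
Variables (R : realType) (k : nat) (d : 'I_k -> nat).

Definition idx := {dffun forall i : 'I_k, 'I_(d i)}.

Definition blk (B : {set 'I_k}) :=
  {dffun forall j : {i : 'I_k | i \in B}, 'I_(d (val j))}.

Definition restr (x : idx) (B : {set 'I_k}) : blk B :=
  @finfun _ (fun j : {i : 'I_k | i \in B} => 'I_(d (val j))) (fun j => x (val j)).

Definition blk_inner (B : {set 'I_k}) (u v : forall i : 'I_k, 'I_(d i) -> R) : R :=
  \sum_(y : blk B) ((\prod_(j : {i : 'I_k | i \in B}) u (val j) (y j)) *
                    (\prod_(j : {i : 'I_k | i \in B}) v (val j) (y j))).

Definition refines (P1 P2 : {set {set 'I_k}}) : Prop :=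
  forall B1, B1 \in P1 -> exists2 B2, B2 \in P2 & B1 \subset B2.

Definition OD_decomp (P : {set {set 'I_k}}) (A : idx -> R) (r : nat)
    (lam : 'I_r -> R) (a : 'I_r -> forall i : 'I_k, 'I_(d i) -> R) : Prop :=
  [/\ forall x : idx, A x = \sum_(n < r) lam n * \prod_(i < k) a n i (x i),
      forall n m : 'I_r, (n <= m)%N -> lam m <= lam n,
      forall n : 'I_r, 0 <= lam n &
      forall B, B \in P -> forall n m : 'I_r,
        blk_inner B (a n) (a m) = (n == m)%:R].

Definition OD (P : {set {set 'I_k}}) (A : idx -> R) : Prop :=
  exists r lam a, @OD_decomp P A r lam a.

(* Multi-indices of Unfold_pi(A): one index m_B (ranging over the block
   multi-indices of B, i.e. identified with [prod_{r in B} d_r]) per block B. *)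
Definition uidx (P : {set {set 'I_k}}) :=
  {dffun forall Bs : {B : {set 'I_k} | B \in P}, blk (val Bs)}.

(* Entry of Unfold_pi(A) at (m_B)_B is a_{i} where i is the (for a partition,
   unique) multi-index with i|_B = m_B for every block B. *)
Definition Unfold (P : {set {set 'I_k}}) (A : idx -> R) (m : uidx P) : R :=
  \sum_(x : idx | [forall Bs, restr x (val Bs) == m Bs]) A x.

End TensorDefs.

Definition snorm (R : realType) (I : finType) (E : I -> finType)
    (T : {dffun forall i : I, E i} -> R) : R :=
  reals.sup (fun v : R => exists x : forall i : I, E i -> R,
      (forall i, \sum_(e : E i) x i e ^+ 2 = 1) /\
      v = \sum_(m : {dffun forall i : I, E i}) T m * \prod_(i : I) x i (m i)).

Arguments Unfold [R k d] P A m.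

(* (a) The inner product of two rank-one tensors over a block B factors as the
   product over the modes of B of the modewise inner products, and each block
   of the coarser partition is a disjoint union of blocks of the finer one; so
   the same decomposition is orthonormal for the coarser partition.
   (b) Pairing Unfold_pi(A) with unit vectors (x_B)_B gives
   sum_n lambda_n prod_B <a_B^(n), x_B>, where a_B^(n) is the tensor product of
   the a_i^(n) for i in B.  For each block the coefficients <a_B^(n), x_B>
   satisfy Bessel's inequality in n, hence have absolute value at most 1.
   Keeping two distinct blocks (pi is not the one-block partition) and using
   AM-GM bounds the pairing by lambda_1, which is attained at x_B = a_B^(1). *)
From HB Require Import structures.
From mathcomp Require Import all_boot all_order all_algebra.
From mathcomp Require Import reals.
From mathcomp Require Import lra.
Import Order.TTheory GRing.Theory Num.Theory.
Local Open Scope ring_scope.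
Set Implicit Arguments. Unset Strict Implicit. Unset Printing Implicit Defensive.

Lemma bigA_distr_dffun (R : comNzRingType) (I : finType) (E : I -> finType)
    (F : forall i, E i -> R) :
  \prod_i \sum_(e : E i) F i e =
  \sum_(m : {dffun forall i, E i}) \prod_i F i (m i).
Proof.
have sum_tagged i : \sum_(e : E i) F i e =
    \sum_(j | tagged_with E i j) untag 0 (F i) j.
  rewrite [RHS](eq_bigl (fun j => (j \in tagged_with E i) && true)); last first.
    by move=> j; rewrite andbT.
  rewrite big_sub_cond.
  rewrite (reindex (tag_with i)); last exact/onW_bij/tag_with_bij.
  by apply: eq_bigr => e _; rewrite (@untagE _ E _ 0 i (F i) (Tagged E e) (erefl i)).
rewrite (eq_bigr _ (fun i _ => sum_tagged i)) bigA_distr_big_dep big_sub.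
rewrite (reindex (@to_family_tagged_with I E)); last first.
  exact/onW_bij/to_family_tagged_with_bij.
rewrite (reindex (@fprod_of_dffun I E)); last exact/onW_bij/fprod_of_dffun_bij.
apply: eq_bigr => m _; apply: eq_bigr => i _ /=.
by rewrite ffunE (@untagE _ E _ 0 i (F i) (Tagged E (m i)) (erefl i)).
Qed.

Lemma bessel_inequality (R : realFieldType) (T : finType) r
    (v : 'I_r -> T -> R) (w : T -> R) :
  (forall n m, \sum_t v n t * v m t = (n == m)%:R) ->
  \sum_n (\sum_t v n t * w t) ^+ 2 <= \sum_t w t ^+ 2.
Proof.
move=> orth_v; set c := fun n => \sum_t v n t * w t; rewrite -/(\sum_n c n ^+ 2).
pose p t := \sum_n c n * v n t.
have w_p : \sum_t w t * p t = \sum_n c n ^+ 2.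
  under eq_bigr do rewrite big_distrr.
  rewrite exchange_big; apply: eq_bigr => n _ /=.
  rewrite expr2 {2}/c big_distrr; apply: eq_bigr => t _ /=.
  by rewrite mulrCA [w t * _]mulrC.
have p_p : \sum_t p t ^+ 2 = \sum_n c n ^+ 2.
  have cross n m : \sum_t c n * v n t * (c m * v m t) = c n * c m * (n == m)%:R.
    rewrite -orth_v big_distrr; apply: eq_bigr => t _ /=.
    by rewrite -!mulrA; congr (_ * _); rewrite mulrCA.
  under eq_bigr do rewrite expr2 big_distrl.
  under eq_bigr do under eq_bigr do rewrite big_distrr.
  rewrite exchange_big; apply: eq_bigr => n _ /=.
  rewrite exchange_big /= (bigD1 n) //= cross eqxx mulr1 big1 ?addr0 ?expr2 //.
  by move=> m /negbTE nm; rewrite cross eq_sym nm mulr0.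
(* [p] is the orthogonal projection of [w] on the span of the [v n]. *)
have : 0 <= \sum_t (w t - p t) ^+ 2 by apply: sumr_ge0 => t _; apply: sqr_ge0.
under eq_bigr do rewrite sqrrB.
rewrite big_split /= big_split /= sumrN sumrMnl w_p p_p => h; lra.
Qed.

Lemma sup_eq_max (R : realType) (E : R -> Prop) (x : R) :
  E x -> (forall y, E y -> y <= x) -> reals.sup E = x.
Proof.
move=> Ex ubx; apply/le_anti/andP; split; first by apply: ge_sup => //; exists x.
by apply: sup_upper_bound => //; split; exists x.
Qed.

Lemma sum_norm_mul_le (R : realFieldType) (I : finType) (u v : I -> R) :
  \sum_i `|u i * v i| <= (\sum_i u i ^+ 2 + \sum_i v i ^+ 2) / 2.
Proof.
rewrite -big_split /= mulr_suml; apply: ler_sum => i _.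
have := sqr_ge0 (`|u i| - `|v i|).
by rewrite sqrrB !real_normK ?num_real // normrM => h; lra.
Qed.

Lemma norm_prod_le_pair (R : numDomainType) (I : finType) (f : I -> R) (i j : I) :
  j != i -> (forall l, `|f l| <= 1) -> `|\prod_l f l| <= `|f i * f j|.
Proof.
move=> ji f_le1; rewrite normr_prod (bigD1 i) //= (bigD1 j) //= mulrA normrM.
apply: ler_piMr; first by rewrite mulr_ge0.
by apply: prodr_ile1 => l _; rewrite normr_ge0 f_le1.
Qed.

Lemma cover_refining_blocks (T : finType) (P1 P2 : {set {set T}}) (B2 : {set T}) :
  partition P1 [set: T] -> trivIset P2 ->
  (forall B1, B1 \in P1 -> exists2 B, B \in P2 & B1 \subset B) ->
  B2 \in P2 -> cover [set B1 in P1 | B1 \subset B2] = B2.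
Proof.
case/and3P=> /eqP cover1T _ _ triv2 refines12 B2P.
apply/setP => i; apply/bigcupP/idP => [[B1] | iB2].
  by rewrite inE => /andP[_ /subsetP]; apply.
have iP1 : i \in cover P1 by rewrite cover1T inE.
exists (pblock P1 i); last by rewrite mem_pblock.
have [B B_P2 sub] := refines12 _ (pblock_mem iP1).
have iB : i \in B by apply: (subsetP sub); rewrite mem_pblock.
by rewrite inE pblock_mem //= -(def_pblock triv2 B2P iB2) (def_pblock triv2 B_P2 iB).
Qed.

Lemma partition_two_blocks (T : finType) (P : {set {set T}}) :
  partition P [set: T] -> [set: T] != set0 -> P != [set [set: T]] ->
  exists B1 B2, [/\ B1 \in P, B2 \in P & B2 != B1].
Proof.
case/and3P=> /eqP coverP _ _ T_neq0 P_neq1.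
have [B1 B1P] : exists B1, B1 \in P.
  apply/set0Pn; apply: contraNneq T_neq0 => P0.
  by rewrite -coverP P0 /cover big_set0.
exists B1.
have [/exists_inP[B2 B2P B21] | /exists_inPn all_eq] := boolP [exists B2 in P, B2 != B1].
  by exists B2; split.
have P1 : P = [set B1].
  apply/setP => B; rewrite inE; apply/idP/eqP => [BP | -> //].
  by have := all_eq B BP; rewrite negbK => /eqP.
by rewrite P1 cover1 in coverP; rewrite P1 coverP eqxx in P_neq1.
Qed.

Section Blocks.
Variables (R : realType) (k : nat) (d : 'I_k -> nat).

Definition blk_tensor (u : forall i : 'I_k, 'I_(d i) -> R) (B : {set 'I_k})
    (z : blk d B) : R :=
  \prod_(j : {i : 'I_k | i \in B}) u (val j) (z j).
Arguments blk_tensor : clear implicits.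

Lemma blk_innerE (B : {set 'I_k}) (u v : forall i : 'I_k, 'I_(d i) -> R) :
  blk_inner B u v = \prod_(i in B) \sum_(e : 'I_(d i)) u i e * v i e.
Proof.
rewrite [RHS]big_sub.
rewrite (bigA_distr_dffun (fun j : {i : 'I_k | i \in B} => fun e => u (val j) e * v (val j) e)).
by apply: eq_bigr => z _; rewrite big_split.
Qed.

Lemma OD_decomp_refines (P1 P2 : {set {set 'I_k}}) (A : idx d -> R) r
    (lam : 'I_r -> R) (a : 'I_r -> forall i : 'I_k, 'I_(d i) -> R) :
  partition P1 [set: 'I_k] -> partition P2 [set: 'I_k] -> refines P1 P2 ->
  OD_decomp P1 A lam a -> OD_decomp P2 A lam a.
Proof.
move=> P1part /and3P[_ triv2 P2_nset0] ref [A_eq lam_dec lam_ge0 orth1].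
split=> // B2 B2P n m.
set Q := [set B1 in P1 | B1 \subset B2].
have coverQ : cover Q = B2 := cover_refining_blocks P1part triv2 ref B2P.
have Q_neq0 : (0 < #|Q|)%N.
  have /set0Pn[i iB2] : B2 != set0 by apply: contraNneq P2_nset0 => <-.
  by rewrite -coverQ in iB2; case/bigcupP: iB2 => B1 B1Q _; apply/card_gt0P; exists B1.
rewrite blk_innerE -coverQ big_trivIset; last first.
  by apply: trivIsetS (partition_trivIset P1part); apply/subsetP => B; rewrite inE => /andP[].
rewrite (eq_bigr (fun _ => (n == m)%:R)); last first.
  by move=> B1; rewrite inE => /andP[B1P _]; rewrite -blk_innerE orth1.
by rewrite prodr_const -natrX; case: (n == m); rewrite ?exp1n ?exp0n.
Qed.

Section Unfolding.
Variable P : {set {set 'I_k}}.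
Hypothesis P_part : partition P [set: 'I_k].

Local Notation block := {B : {set 'I_k} | B \in P}.

Let mem_coverP i : i \in cover P.
Proof. by rewrite (cover_partition P_part) inE. Qed.

Definition block_of (i : 'I_k) : block :=
  exist _ (pblock P i) (pblock_mem (mem_coverP i)).

Definition mode_in_block (i : 'I_k) : {j : 'I_k | j \in val (block_of i)} :=
  exist _ i (etrans (mem_pblock P i) (mem_coverP i)).

Definition uidx_of_idx (y : idx d) : uidx d P :=
  @finfun _ (fun Bs : block => blk d (val Bs)) (fun Bs => restr y (val Bs)).

Definition idx_of_uidx (m : uidx d P) : idx d :=
  @finfun _ (fun i : 'I_k => 'I_(d i)) (fun i => m (block_of i) (mode_in_block i)).

Lemma uidx_of_idxK : cancel uidx_of_idx idx_of_uidx.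
Proof. by move=> y; apply/ffunP => i; rewrite !ffunE. Qed.

Lemma idx_of_uidxK : cancel idx_of_uidx uidx_of_idx.
Proof.
move=> m; apply/ffunP => Bs; apply/ffunP => j; rewrite !ffunE; apply: val_inj => /=.
have jBs : block_of (val j) = Bs.
  exact/val_inj/(def_pblock (partition_trivIset P_part) (valP Bs) (valP j)).
suff m_congr (X : block) (j' : {i : 'I_k | i \in val X}) :
  X = Bs -> val j' = val j -> (m X j' : nat) = m Bs j by exact: m_congr.
by move=> eX ej; subst X; congr (nat_of_ord (m _ _)); apply: val_inj.
Qed.

Lemma UnfoldE (A : idx d -> R) (m : uidx d P) : Unfold P A m = A (idx_of_uidx m).
Proof.
rewrite /Unfold (big_pred1 (idx_of_uidx m)) // => y /=.
apply/forallP/eqP => [restr_y | ->] => [|Bs].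
  rewrite -[y]uidx_of_idxK; congr idx_of_uidx.
  by apply/ffunP => Bs; rewrite ffunE; apply/eqP/restr_y.
by rewrite -{2}(idx_of_uidxK m) ffunE.
Qed.

Lemma prod_over_blocks (f : 'I_k -> R) :
  \prod_i f i = \prod_(Bs : block) \prod_(j : {i : 'I_k | i \in val Bs}) f (val j).
Proof.
rewrite (eq_bigl (mem (cover P))) => [|i]; last by rewrite inE mem_coverP.
rewrite big_trivIset ?(partition_trivIset P_part) // big_sub.
by apply: eq_bigr => Bs _; rewrite big_sub.
Qed.

Lemma Unfold_pairing (A : idx d -> R) (x : forall Bs : block, blk d (val Bs) -> R) :
  \sum_(m : uidx d P) Unfold P A m * \prod_(Bs : block) x Bs (m Bs) =
  \sum_(y : idx d) A y * \prod_(Bs : block) x Bs (restr y (val Bs)).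
Proof.
rewrite (reindex uidx_of_idx); last by exists idx_of_uidx => m _;
  [exact: uidx_of_idxK | exact: idx_of_uidxK].
by apply: eq_bigr => y _; rewrite UnfoldE uidx_of_idxK; under eq_bigr do rewrite ffunE.
Qed.

Section Decomposition.
Variables (A : idx d -> R) (r : nat) (lam : 'I_r -> R).
Variable a : 'I_r -> forall i : 'I_k, 'I_(d i) -> R.
Hypothesis A_decomp : OD_decomp P A lam a.

Lemma OD_pairing (x : forall Bs : block, blk d (val Bs) -> R) :
  \sum_(m : uidx d P) Unfold P A m * \prod_(Bs : block) x Bs (m Bs) =
  \sum_(n < r) lam n *
    \prod_(Bs : block) \sum_(z : blk d (val Bs)) blk_tensor (a n) (val Bs) z * x Bs z.
Proof.
case: A_decomp => A_eq _ _ _; rewrite Unfold_pairing.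
under eq_bigr do rewrite A_eq big_distrl.
rewrite exchange_big; apply: eq_bigr => n _ /=.
under eq_bigr do rewrite -mulrA.
rewrite -big_distrr bigA_distr_dffun (reindex uidx_of_idx) /=; last first.
  by exists idx_of_uidx => m _; [exact: uidx_of_idxK | exact: idx_of_uidxK].
congr (_ * _); apply: eq_bigr => y _.
rewrite prod_over_blocks -big_split; apply: eq_bigr => Bs _ /=.
by rewrite ffunE /blk_tensor; under [in RHS]eq_bigr do rewrite ffunE.
Qed.

Lemma blk_tensor_orthonormal (Bs : block) (n m : 'I_r) :
  \sum_(z : blk d (val Bs)) blk_tensor (a n) (val Bs) z * blk_tensor (a m) (val Bs) z =
  (n == m)%:R.
Proof. by case: A_decomp => _ _ _ orth; exact: orth (valP Bs) n m. Qed.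

Variable hr : (0 < r)%N.
Local Notation lam_top := (lam (Ordinal hr)).

Lemma OD_pairing_le (B1 B2 : block) (x : forall Bs : block, blk d (val Bs) -> R) :
  B2 != B1 -> (forall Bs, \sum_(z : blk d (val Bs)) x Bs z ^+ 2 = 1) ->
  \sum_(m : uidx d P) Unfold P A m * \prod_(Bs : block) x Bs (m Bs) <= lam_top.
Proof.
case: A_decomp => _ lam_dec lam_ge0 _ B21 x_unit; rewrite OD_pairing.
set c := fun n (Bs : block) => \sum_(z : blk d (val Bs)) blk_tensor (a n) (val Bs) z * x Bs z.
have bessel_c Bs : \sum_n c n Bs ^+ 2 <= 1.
  by rewrite -(x_unit Bs); apply: bessel_inequality => n m; apply: blk_tensor_orthonormal.
have c_le1 n Bs : `|c n Bs| <= 1.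
  rewrite -(expr_le1 (n := 2)) ?normr_ge0 // real_normK ?num_real //.
  by apply: le_trans (bessel_c Bs); rewrite (bigD1 n) //= lerDl sumr_ge0 // => *; rewrite sqr_ge0.
apply: (@le_trans _ _ (lam_top * \sum_n `|c n B1 * c n B2|)).
  rewrite big_distrr; apply: ler_sum => n _ /=.
  apply: le_trans (ler_wpM2l (lam_ge0 n) (ler_norm _)) _.
  apply: le_trans (ler_wpM2l (lam_ge0 n) (norm_prod_le_pair B21 (c_le1 n))) _.
  by apply: ler_wpM2r; [exact: normr_ge0 | exact: lam_dec].
apply: le_trans (ler_wpM2l (lam_ge0 _) (sum_norm_mul_le _ _)) _.
rewrite ler_piMr //; have := bessel_c B1; have := bessel_c B2; lra.
Qed.

Lemma OD_pairing_top (B : block) :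
  \sum_(m : uidx d P) Unfold P A m *
    \prod_(Bs : block) blk_tensor (a (Ordinal hr)) (val Bs) (m Bs) = lam_top.
Proof.
rewrite (OD_pairing (fun Bs => blk_tensor (a (Ordinal hr)) (val Bs))).
rewrite (bigD1 (Ordinal hr)) //= big1 => [|Bs _]; last by rewrite blk_tensor_orthonormal eqxx.
rewrite mulr1 big1 ?addr0 // => n n_top.
by rewrite (bigD1 B) //= blk_tensor_orthonormal (negbTE n_top) mul0r mulr0.
Qed.

Lemma snorm_Unfold_OD (B1 B2 : block) : B2 != B1 -> snorm (Unfold P A) = lam_top.
Proof.
move=> B21; apply: sup_eq_max => [|v [x [x_unit ->]]]; last exact: OD_pairing_le B21 x_unit.
exists (fun Bs => blk_tensor (a (Ordinal hr)) (val Bs)); split; last by rewrite OD_pairing_top.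
move=> Bs; rewrite -[RHS]/(true%:R) -(eqxx (Ordinal hr)) -(blk_tensor_orthonormal Bs).
by apply: eq_bigr => z _; rewrite expr2.
Qed.

End Decomposition.

End Unfolding.

End Blocks.

Theorem lemma5p3 (R : realType) (k : nat) (d : 'I_k -> nat) (A : idx d -> R) :
  (0 < k)%N ->
  (forall P1 P2 : {set {set 'I_k}},
      partition P1 [set: 'I_k] -> partition P2 [set: 'I_k] ->
      refines P1 P2 -> OD P1 A -> OD P2 A) /\
  (forall P : {set {set 'I_k}},
      partition P [set: 'I_k] -> P != [set [set: 'I_k]] ->
      forall (r : nat) (hr : (0 < r)%N) (lam : 'I_r -> R)
             (a : 'I_r -> forall i : 'I_k, 'I_(d i) -> R),
      OD_decomp P A lam a ->
      snorm (Unfold P A) = lam (Ordinal hr)).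
Proof.
move=> k_gt0; split=> [P1 P2 P1_part P2_part ref [r [lam [a decomp]]] |
                       P P_part P_neq1 r hr lam a decomp].
  by exists r, lam, a; exact: OD_decomp_refines P1_part P2_part ref decomp.
have T_neq0 : [set: 'I_k] != set0 by apply/set0Pn; exists (Ordinal k_gt0).
have [B1 [B2 [B1P B2P B21]]] := partition_two_blocks P_part T_neq0 P_neq1.
apply: (snorm_Unfold_OD P_part decomp hr (B1 := exist _ B1 B1P) (B2 := exist _ B2 B2P)).
by apply: contra B21 => /eqP[->].
Qed.
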